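(* Let $p=\sum_{i=0}^n c_iT^i$ be a polynomial of degree $n\ge1$ over $\mathbb S$ and let $a\in\{1,-1\}$ be a root of $p$. Define $l=\min\{i\in\mathbb N: c_i\ne0\}$ and $k=\min\{i\in\mathbb N: c_{i+1}=-a^{i+1-l}c_l\}$. Define $d_{n-1},\dots,d_0\in\mathbb S$ recursively in decreasing order of $i$ by: $d_i=c_{i+1}$ if $c_{i+1}\ne0$ and $i>k$; $d_i=ad_{i+1}$ if $c_{i+1}=0$ and $i>k$; $d_i=-a^{i+l-1}c_l$ if $l\le i\le k$; $d_i=0$ if $0\le i<l$. Then $q=\sum_{i=0}^{n-1}d_iT^i$ satisfies $p\in(T-a)\boxdot q$, i.e. $c_n=d_{n-1}$, $c_0=-ad_0$, and $c_i\in(-ad_i)\boxplus d_{i-1}$ for $i=1,\dots,n-1$.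
   Context: The sign hyperfield $\mathbb S$ is $\{0,1,-1\}$ with the usual multiplication and hyperaddition $0\boxplus a=\{a\}$, $1\boxplus1=\{1\}$, $(-1)\boxplus(-1)=\{-1\}$, $1\boxplus(-1)=\{0,1,-1\}$. Iterated sums: $\boxplus_{i=1}^n a_i=\bigcup_{b\in\boxplus_{i=1}^{n-1}a_i} b\boxplus a_n$. Polynomials over $\mathbb S$ are finitely supported sequences $\sum c_iT^i$ of degree the largest $k$ with $c_k\ne0$; hyperproduct $p\boxdot q=\{\sum e_iT^i : e_i\in \boxplus_{k+l=i} c_kd_l\}$. An element $a\in\mathbb S$ is a root of $p=\sum c_iT^i$ if $0\in\boxplus_i c_ia^i$. *)

From HB Require Import structures.
From mathcomp Require Import all_boot all_algebra.
Set Implicit Arguments. Unset Strict Implicit. Unset Printing Implicit Defensive.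

Inductive sgn := S0 | Sp | Sm.   (* 0, 1, -1 *)

Definition sgn_eqb (x y : sgn) : bool :=
  match x, y with S0, S0 | Sp, Sp | Sm, Sm => true | _, _ => false end.
Lemma sgn_eqP : Equality.axiom sgn_eqb.
Proof. by case; case; constructor. Qed.
HB.instance Definition _ := hasDecEq.Build sgn sgn_eqP.

Definition smul (x y : sgn) : sgn :=
  match x, y with
  | S0, _ | _, S0 => S0
  | Sp, z | z, Sp => z
  | Sm, Sm => Sp
  end.
Definition sopp (x : sgn) : sgn := smul Sm x.

(* powers a^n (n : nat) and a^z (z : int); inverse of 1 is 1, of -1 is -1 *)
Fixpoint spow (a : sgn) (n : nat) : sgn :=
  if n is m.+1 then smul a (spow a m) else Sp.
Definition sinv (a : sgn) : sgn := a.
Definition spowz (a : sgn) (z : int) : sgn :=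
  match z with Posz n => spow a n | Negz n => spow (sinv a) n.+1 end.

(* hyperaddition, as the (list of elements of the) set a ⊞ b *)
Definition hadd (x y : sgn) : seq sgn :=
  match x, y with
  | S0, z | z, S0 => [:: z]
  | Sp, Sp => [:: Sp]
  | Sm, Sm => [:: Sm]
  | _, _ => [:: S0; Sp; Sm]
  end.

(* iterated hypersum  ⊞_{i=1}^n a_i = ⋃_{b ∈ ⊞_{i=1}^{n-1} a_i} b ⊞ a_n *)
Definition hsum (s : seq sgn) : seq sgn :=
  match s with
  | [::] => [:: S0]
  | x :: s' => foldl (fun acc y => flatten [seq hadd b y | b <- acc]) [:: x] s'
  end.

Definition is_poly_deg (c : nat -> sgn) (n : nat) : Prop :=
  c n != S0 /\ (forall i, (n < i)%N -> c i = S0).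

Definition is_root (c : nat -> sgn) (n : nat) (a : sgn) : Prop :=
  S0 \in hsum [seq smul (c i) (spow a i) | i <- iota 0 n.+1].

From mathcomp Require Import all_boot all_algebra zify.

Set Implicit Arguments.
Unset Strict Implicit.
Unset Printing Implicit Defensive.

(* For a unit a, a power a^m only depends on the parity of m, so every
   integer power a^(m - n) occurring in the statement equals a^(m + n).
   Writing  alt m = - a^m c_l,  the quotient coefficients on the middle
   range l <= i <= k are d_i = alt (i + l + 1), and consecutive ones are
   related by a d_i = d_(i-1).  The proof then checks the membership
   c_i ∈ (-a d_i) ⊞ d_(i-1) separately on the ranges i < l, i = l,
   l < i <= k, i = k + 1 and i > k + 1, using three facts about ⊞:
   x ∈ x ⊞ 0,  y ∈ x ⊞ y for y ≠ 0, and (-y) ⊞ y is everything when y ≠ 0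
   and contains 0 in any case. *)

Lemma smulA (x y z : sgn) : smul x (smul y z) = smul (smul x y) z.
Proof. by case: x; case: y; case: z. Qed.

Lemma smul_sopp (x y : sgn) : smul x (sopp y) = sopp (smul x y).
Proof. by case: x; case: y. Qed.

Lemma hadd_memx0 (x : sgn) : x \in hadd x S0.
Proof. by case: x. Qed.

Lemma hadd_memr (x y : sgn) : y != S0 -> y \in hadd x y.
Proof. by case: x; case: y. Qed.

Lemma hadd_opp_full (x y : sgn) : y != S0 -> x \in hadd (sopp y) y.
Proof. by case: x; case: y. Qed.

Lemma hadd_opp0 (y : sgn) : S0 \in hadd (sopp y) y.
Proof. by case: y. Qed.

Section UnitPowers.

Variable a : sgn.
Hypothesis a_unit : a = Sp \/ a = Sm.

Lemma spow_odd (m : nat) : spow a m = if odd m then a else Sp.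
Proof.
by elim: m => [|m IH] //=; rewrite IH; case: (odd m); case: a_unit => ->.
Qed.

Lemma spowSS (m : nat) : spow a m.+2 = spow a m.
Proof. by rewrite !spow_odd /= negbK. Qed.

Lemma spow_double (m : nat) : spow a (m + m) = Sp.
Proof. by rewrite spow_odd addnn odd_double. Qed.

(* The integer powers of the statement reduce to natural ones:
   a^(m - n) = a^(m + n), the two exponents having the same parity. *)
Lemma spowz_sub (m n : nat) : spowz a (m%:Z - n%:Z) = spow a (m + n).
Proof.
case: (leqP n m) => [le_nm | lt_mn].
  have -> : (m%:Z - n%:Z)%R = Posz (m - n) by lia.
  rewrite /= !spow_odd -{2}(subnK le_nm) !oddD.
  by case: (odd (m - n)); case: (odd n).
have -> : (m%:Z - n%:Z)%R = Negz (n - m).-1 by rewrite NegzE; lia.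
rewrite /spowz /sinv prednK ?subn_gt0 // !spow_odd -{2}(subnK (ltnW lt_mn)).
by rewrite !oddD; case: (odd (n - m)); case: (odd m).
Qed.

Lemma sopp_spow_neq0 (m : nat) (x : sgn) :
  x != S0 -> sopp (smul (spow a m) x) != S0.
Proof.
by rewrite spow_odd; case: a_unit => ->; case: (odd m); case: x.
Qed.

End UnitPowers.

Section DivisionByLinearFactor.

Variables (n : nat) (c : nat -> sgn) (a : sgn) (l k : nat) (d : nat -> sgn).

Hypothesis a_unit : a = Sp \/ a = Sm.
Hypothesis c_n_neq0 : c n != S0.
Hypothesis c_deg : forall i, (n < i)%N -> c i = S0.
Hypothesis c_l_neq0 : c l != S0.
Hypothesis c_below_l : forall i, (i < l)%N -> c i = S0.
Hypothesis c_k : c k.+1 = sopp (smul (spowz a (k.+1%:Z - l%:Z)) (c l)).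
Hypothesis d_rec : forall i, (i < n)%N ->
     ((k < i)%N -> c i.+1 != S0 -> d i = c i.+1) /\
     ((k < i)%N -> c i.+1 = S0 -> d i = smul a (d i.+1)) /\
     ((l <= i <= k)%N -> d i = sopp (smul (spowz a (i%:Z + l%:Z - 1)) (c l))) /\
     ((i < l)%N -> d i = S0).

(* The signs -a^m c_l making up the quotient between l and k. *)
Let alt (m : nat) : sgn := sopp (smul (spow a m) (c l)).

Lemma alt_neq0 (m : nat) : alt m != S0.
Proof. exact: sopp_spow_neq0. Qed.

Lemma smul_alt (m : nat) : smul a (alt m.+1) = alt m.
Proof. by rewrite /alt smul_sopp smulA -/(spow a m.+2) spowSS. Qed.

Lemma c_k_alt : c k.+1 = alt (k.+1 + l).
Proof. by rewrite c_k spowz_sub. Qed.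

(* c_(k+1) is nonzero, hence l <= k + 1; and it differs from
   - a^(2l) c_l = - c_l, hence k + 1 <> l. *)
Lemma l_le_k : (l <= k)%N.
Proof.
case: (ltngtP k.+1 l) => [lt_kl | lt_lk | eq_kl].
- by have := alt_neq0 (k.+1 + l); rewrite -c_k_alt c_below_l.
- by [].
- have := c_k_alt; rewrite /alt eq_kl spow_double // => c_l_opp.
  by move: c_l_neq0 c_l_opp; case: (c l).
Qed.

Lemma k_lt_n : (k < n)%N.
Proof.
rewrite ltnNge; apply/negP => le_nk.
by have := alt_neq0 (k.+1 + l); rewrite -c_k_alt c_deg.
Qed.

Lemma n_gt0 : (0 < n)%N.
Proof. exact: leq_ltn_trans k_lt_n. Qed.

Lemma d_above_neq0 (i : nat) : (k < i < n)%N -> c i.+1 != S0 -> d i = c i.+1.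
Proof. by case/andP=> lt_ki lt_in; have [d1 _] := d_rec lt_in; apply: d1. Qed.

Lemma d_above_eq0 (i : nat) :
  (k < i < n)%N -> c i.+1 = S0 -> d i = smul a (d i.+1).
Proof. by case/andP=> lt_ki lt_in; have [_ [d2 _]] := d_rec lt_in; apply: d2. Qed.

Lemma d_mid (i : nat) : (l <= i <= k)%N -> d i = alt (i + l).+1.
Proof.
move=> range_i; have lt_in : (i < n)%N.
  by apply: leq_ltn_trans k_lt_n; case/andP: range_i.
have [_ [_ [-> // _]]] := d_rec lt_in.
have -> : (i%:Z + l%:Z - 1)%R = ((i + l)%N%:Z - 1%N%:Z)%R by lia.
by rewrite spowz_sub // addn1.
Qed.

Lemma d_below (i : nat) : (i < l)%N -> d i = S0.
Proof.
move=> lt_il; have lt_in : (i < n)%N.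
  by apply: leq_trans (leq_trans l_le_k (ltnW k_lt_n)).
by have [_ [_ [_ ->]]] := d_rec lt_in.
Qed.

Lemma d_k : d k = c k.+1.
Proof. by rewrite d_mid ?l_le_k ?leqnn // c_k_alt addSn. Qed.

Lemma lead_relation : c n = d n.-1.
Proof.
have pred_n := prednK n_gt0.
case: (ltngtP k n.-1) => [lt_k | lt_nk | eq_k].
- have lt_pn : (n.-1 < n)%N by rewrite ltn_predL n_gt0.
  by rewrite d_above_neq0 ?lt_k ?lt_pn ?pred_n.
- by move: lt_nk; rewrite ltnNge -ltnS pred_n k_lt_n.
- by rewrite -eq_k d_k eq_k pred_n.
Qed.

(* At the first nonzero coefficient, -a d_l = -a^(2l+2) (-c_l) = c_l. *)
Lemma opp_smul_d_l : sopp (smul a (d l)) = c l.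
Proof.
rewrite d_mid ?leqnn ?l_le_k // smul_alt /alt spow_double //.
by case: (c l).
Qed.

Lemma const_relation : c 0 = sopp (smul a (d 0)).
Proof.
case: (posnP l) => [l_eq0 | l_gt0]; first by rewrite -l_eq0 opp_smul_d_l.
by rewrite c_below_l // d_below //; case: a_unit => ->.
Qed.

Lemma coef_below_l (i : nat) :
  (i < l)%N -> c i \in hadd (sopp (smul a (d i))) (d i.-1).
Proof.
move=> lt_il; have lt_pl : (i.-1 < l)%N by apply: leq_ltn_trans lt_il; apply: leq_pred.
by rewrite c_below_l // !d_below //; case: a_unit => ->.
Qed.

Lemma coef_at_l : (0 < l)%N -> c l \in hadd (sopp (smul a (d l))) (d l.-1).
Proof. by move=> l_gt0; rewrite opp_smul_d_l d_below ?ltn_predL ?hadd_memx0. Qed.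

(* Strictly between l and k + 1, -a d_i = -d_(i-1) with d_(i-1) nonzero, so
   the hypersum is all of S. *)
Lemma coef_mid (i : nat) :
  (l < i <= k)%N -> c i \in hadd (sopp (smul a (d i))) (d i.-1).
Proof.
case/andP=> lt_li le_ik; have i_gt0 : (0 < i)%N by apply: leq_ltn_trans lt_li.
have range_p : (l <= i.-1 <= k)%N.
  by rewrite -ltnS prednK // lt_li (leq_trans (leq_pred i) le_ik).
rewrite (d_mid range_p) d_mid ?(ltnW lt_li) // smul_alt -addSn prednK //.
exact/hadd_opp_full/alt_neq0.
Qed.

(* Beyond k, d_(i-1) is either c_i (when nonzero) or a d_i. *)
Lemma coef_above_k (i : nat) :
  (k < i.-1 < n)%N -> c i \in hadd (sopp (smul a (d i))) (d i.-1).
Proof.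
move=> range_p; have i_gt0 : (0 < i)%N by case: i range_p.
case: (eqVneq (c i) S0) => [c_i_eq0 | c_i_neq0].
  by rewrite (d_above_eq0 range_p) prednK // c_i_eq0 hadd_opp0.
by rewrite (d_above_neq0 range_p) prednK // hadd_memr.
Qed.

Lemma coef_above_l (i : nat) :
  (l < i < n)%N -> c i \in hadd (sopp (smul a (d i))) (d i.-1).
Proof.
case/andP=> lt_li lt_in.
case: (leqP i k) => [le_ik | lt_ki]; first by apply: coef_mid; rewrite lt_li le_ik.
case: (ltngtP i k.+1) => [| lt_ki1 | ->].
- by rewrite ltnS leqNgt lt_ki.
- have i_gt0 : (0 < i)%N by apply: leq_ltn_trans lt_li.
  apply: coef_above_k.
  by rewrite (leq_ltn_trans (leq_pred i) lt_in) andbT -ltnS (prednK i_gt0).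
- by rewrite /= d_k hadd_memr // c_k_alt alt_neq0.
Qed.

Lemma middle_relation (i : nat) :
  (1 <= i <= n.-1)%N -> c i \in hadd (sopp (smul a (d i))) (d i.-1).
Proof.
case/andP=> i_gt0 le_in; have lt_in : (i < n)%N by rewrite -(prednK n_gt0) ltnS.
case: (ltngtP i l) => [lt_il | lt_li | eq_il].
- exact: coef_below_l.
- by apply: coef_above_l; rewrite lt_li.
- by move: i_gt0; rewrite eq_il; apply: coef_at_l.
Qed.

End DivisionByLinearFactor.

(* The hypotheses that a is a root of p and that k is minimal only serve to
   guarantee that k exists; n >= 1 follows from k < n. *)
Theorem mainTheorem11 (n : nat) (c : nat -> sgn) (a : sgn) (l k : nat)
    (d : nat -> sgn) :
  (1 <= n)%N ->
  is_poly_deg c n ->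
  (a = Sp \/ a = Sm) ->
  is_root c n a ->
  (* l = min { i | c_i <> 0 } *)
  c l != S0 -> (forall i, (i < l)%N -> c i = S0) ->
  (* k = min { i | c_(i+1) = - a^(i+1-l) c_l } *)
  c k.+1 = sopp (smul (spowz a (k.+1%:Z - l%:Z)) (c l)) ->
  (forall i, (i < k)%N -> c i.+1 <> sopp (smul (spowz a (i.+1%:Z - l%:Z)) (c l))) ->
  (* recursive definition of d_(n-1), ..., d_0 *)
  (forall i, (i < n)%N ->
     ((k < i)%N -> c i.+1 != S0 -> d i = c i.+1) /\
     ((k < i)%N -> c i.+1 = S0 -> d i = smul a (d i.+1)) /\
     ((l <= i <= k)%N -> d i = sopp (smul (spowz a (i%:Z + l%:Z - 1)) (c l))) /\
     ((i < l)%N -> d i = S0)) ->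
  c n = d n.-1 /\ c 0%N = sopp (smul a (d 0%N)) /\
  (forall i, (1 <= i <= n.-1)%N -> c i \in hadd (sopp (smul a (d i))) (d i.-1)).
Proof.
move=> _ [c_n_neq0 c_deg] a_unit _ c_l_neq0 c_below_l c_k _ d_rec.
split; [|split].
- exact: (lead_relation a_unit c_n_neq0 c_deg c_l_neq0 c_below_l c_k d_rec).
- exact: (const_relation a_unit c_n_neq0 c_deg c_l_neq0 c_below_l c_k d_rec).
- exact: (middle_relation a_unit c_n_neq0 c_deg c_l_neq0 c_below_l c_k d_rec).
Qed.
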